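(* For a positive integer $d$, the number of primitive $(d,d)$-necklaces is odd if and only if $d$ is squarefree.
   Context: A $(d,d)$-necklace is a circular arrangement of $d$ white and $d$ black beads modulo cyclic rotation; it is primitive if its orbit under rotation has exactly $2d$ elements. *)

From mathcomp Require Import all_boot.
Set Implicit Arguments. Unset Strict Implicit. Unset Printing Implicit Defensive.

Definition word (n : nat) := n.-tuple bool.

Definition necklace_of (n : nat) (w : word n) : {set word n} :=
  [set [tuple of rot i w] | i : 'I_n].

Definition balanced (d : nat) (w : word (2 * d)) : bool := count id w == d.

Definition primitive_necklaces (d : nat) : {set {set word (2 * d)}} :=
  [set necklace_of w | w in [set w : word (2 * d) |
      balanced w && (#|necklace_of w| == 2 * d)]].

Definition squarefree (n : nat) : bool :=
  [forall p : 'I_n.+1, prime p ==> ~~ (p * p %| n)].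

From mathcomp Require Import all_boot zify.
Set Implicit Arguments. Unset Strict Implicit. Unset Printing Implicit Defensive.

(** Swapping the colours is an involution on primitive (d,d)-necklaces, so their number has
    the parity of the number F(d) of self-complementary ones.  A primitive necklace is
    self-complementary iff its words w are antiperiodic: rotating w by d complements it.
    There are 2^d antiperiodic words of length 2d; each has minimal period 2e for some e | d
    with d/e odd, and is the repetition of a primitive antiperiodic word of length 2e, whence
      2^d = \sum_(e | d, d/e odd) 2e F(e).
    All these e have the 2-adic valuation a of d, so dividing by 2^(a+1) and reducing mod 2
    shows that an odd number of them have F(e) odd iff d <= 2.  The same count holds with
    "e squarefree" instead: if an odd prime p divides d, multiplying or dividing by p pairs
    the squarefree e off, and if d = 2^a only e = d occurs.  Strong induction on d then
    identifies the parity of F(d) with the squarefreeness of d. *)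

Lemma odd_card_involution (T : finType) (S : {set T}) (g : T -> T) :
  {in S, forall x, g x \in S} -> {in S, involutive g} ->
  odd #|S| = odd #|[set x in S | g x == x]|.
Proof.
move=> gS gK; set F := [set x in S | g x == x].
(* The points moved by g pair up as {x, g x}; B keeps the one of smaller rank. *)
pose B := [set x in S | enum_rank x < enum_rank (g x)].
have gB_inj : {in B &, injective g}.
  by move=> x y /setIdP[xS _] /setIdP[yS _] /(congr1 g); rewrite !gK.
rewrite -(cardsID F S) (setIidPr _); last by apply/subsetP => x /setIdP[].
suff -> : S :\: F = B :|: g @: B.
  rewrite cardsU card_in_imset // addnn.
  suff -> : B :&: g @: B = set0 by rewrite cards0 subn0 oddD odd_double addbF.
  apply/setP => x; rewrite !inE; apply/andP => -[/andP[_ lt_xg] /imsetP[y]].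
  by move=> /setIdP[yS lt_yg] def_x; rewrite def_x gK // ltnNge ltnW in lt_xg.
apply/setP => x; rewrite !inE; apply/andP/orP => [[gx_x xS] | ].
  case: (ltngtP (enum_rank x) (enum_rank (g x))) => [lt_xg | lt_gx | ].
  - by left; apply/andP.
  - right; apply/imsetP; exists (g x); last by rewrite gK.
    by rewrite inE gS // gK.
  - by move/val_inj/enum_rank_inj => gxE; rewrite -gxE xS eqxx in gx_x.
case=> [/andP[xS lt_xg] | /imsetP[y /setIdP[yS lt_yg] ->]].
  rewrite xS; split=> //; apply: contraTneq lt_xg => ->; by rewrite ltnn.
rewrite (gS _ yS) gK //; split=> //; apply: contraTneq lt_yg => <-; by rewrite ltnn.
Qed.

(** * Periodic and antiperiodic sequences *)

Section Periodic.

Variable T : Type.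
Implicit Types (f : nat -> T) (p q : nat).

Definition periodic f p := forall j, f (j + p) = f j.

Lemma periodicM f p k : periodic f p -> periodic f (k * p).
Proof.
by move=> fp; elim: k => [|k IHk] j; rewrite ?addn0 // mulSn addnA IHk fp.
Qed.

Lemma periodic_modE f p j : periodic f p -> f (j %% p) = f j.
Proof. by move=> fp; rewrite {2}(divn_eq j p) addnC periodicM. Qed.

Lemma periodic_mod f p q : periodic f p -> periodic f q -> periodic f (q %% p).
Proof.
move=> fp fq j; rewrite -(periodicM (q %/ p) fp (j + q %% p)) -addnA.
by rewrite [q %% p + _]addnC -divn_eq fq.
Qed.

Lemma periodic_gcd f p q : periodic f p -> periodic f q -> periodic f (gcdn p q).
Proof.
elim/ltn_ind: p q => p IHp q fp fq; have [->|p_gt0] := posnP p; first by rewrite gcd0n.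
rewrite gcdnE gtn_eqF //; apply: IHp => //; first exact: ltn_pmod.
exact: periodic_mod.
Qed.

Lemma periodic_shift f n i k : periodic f n -> i <= n -> i <= k ->
  (forall j, f (i + j) = f (k + j)) -> periodic f (k - i).
Proof.
move=> fn le_in le_ik fik j.
have := fik (j + n - i).
have -> : i + (j + n - i) = j + n by lia.
have -> : k + (j + n - i) = j + (k - i) + n by lia.
by rewrite !fn.
Qed.

End Periodic.

Section Antiperiodic.

Implicit Types (f : nat -> bool).

Definition antiperiodic f p := forall j, f (j + p) = ~~ f j.

Lemma antiperiodic_periodic f p : antiperiodic f p -> periodic f (2 * p).
Proof. by move=> fp j; rewrite mul2n -addnn addnA !fp negbK. Qed.

Lemma antiperiodic_not_periodic f p : antiperiodic f p -> ~ periodic f p.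
Proof. by move=> fa fp; have := fa 0; rewrite fp; case: (f 0). Qed.

Lemma antiperiodicM_odd f p k : antiperiodic f p -> odd k -> antiperiodic f (k * p).
Proof.
move=> fp k_odd j.
have -> : j + k * p = j + p + k./2 * (2 * p).
  by rewrite -{1}(odd_double_half k) k_odd -mul2n; lia.
by rewrite periodicM ?fp //; apply: antiperiodic_periodic.
Qed.

Lemma antiperiodic_dvd f p q :
  periodic f (2 * p) -> antiperiodic f q -> p %| q -> antiperiodic f p.
Proof.
move=> fp fq /dvdnP[k def_q]; subst q.
have def_k := odd_double_half k; case: (odd k) def_k => /= def_k.
  move=> j; rewrite -fq; have -> : j + k * p = j + p + k./2 * (2 * p) by lia.
  by rewrite periodicM.
case: (antiperiodic_not_periodic fq).
have -> : k * p = k./2 * (2 * p) by lia.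
exact: periodicM.
Qed.

End Antiperiodic.

(** * Words and necklaces *)

Section Beads.

Variable n : nat.
Implicit Types w v : word n.

Definition bead w j : bool := nth false w (j %% n).

Lemma bead_mod w j : bead w (j %% n) = bead w j.
Proof. by rewrite /bead modn_mod. Qed.

Lemma bead_periodic w : periodic (bead w) n.
Proof. by move=> j; rewrite /bead modnDr. Qed.

Lemma eq_from_bead w v : bead w =1 bead v -> w = v.
Proof.
move=> eq_wv; apply: eq_from_tnth => i; have := eq_wv i.
by rewrite /bead modn_small // !(tnth_nth false).
Qed.

Lemma bead_rot w i j : i <= n -> bead [tuple of rot i w] j = bead w (i + j).
Proof.
move=> le_in; have [n0|n_gt0] := posnP n.
  by rewrite /bead !nth_default // ?size_rot size_tuple n0.
rewrite /bead -modnDmr /= /rot nth_cat size_drop size_tuple.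
have lt_jn : j %% n < n by rewrite ltn_pmod.
case: ltnP => [lt_j_ni | le_ni_j].
  by rewrite nth_drop (@modn_small (i + _)) //; lia.
rewrite nth_take; last by lia.
have -> : i + j %% n = (j %% n - (n - i)) + n by lia.
by rewrite modnDr (@modn_small (_ - _)) //; lia.
Qed.

Lemma bead_mktuple (g : nat -> bool) j :
  0 < n -> bead [tuple g i | i < n] j = g (j %% n).
Proof.
by move=> n_gt0; rewrite /bead -/(nat_of_ord (Ordinal (ltn_pmod j n_gt0))) nth_mktuple.
Qed.

Definition periodicb w p := [forall j : 'I_n, bead w (j + p) == bead w j].

Lemma periodicbP w p : 0 < n -> reflect (periodic (bead w) p) (periodicb w p).
Proof.
move=> n_gt0; apply: (iffP forallP) => [wp j | wp j]; last exact/eqP.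
rewrite -bead_mod -modnDml bead_mod -[in RHS]bead_mod.
exact/eqP/(wp (Ordinal (ltn_pmod j n_gt0))).
Qed.

Fact min_period_subproof w : exists p, (0 < p) && periodicb w p.
Proof.
have [n0|n_gt0] := posnP n.
  by exists 1; apply/forallP => -[j]; rewrite n0.
by exists n; rewrite n_gt0; apply/periodicbP/bead_periodic.
Qed.

Definition min_period w := ex_minn (min_period_subproof w).

Lemma min_period_gt0 w : 0 < min_period w.
Proof. by rewrite /min_period; case: ex_minnP => p /andP[]. Qed.

Hypothesis n_gt0 : 0 < n.

Lemma min_period_periodic w : periodic (bead w) (min_period w).
Proof. by rewrite /min_period; case: ex_minnP => p /andP[_ /(periodicbP _ _ n_gt0)]. Qed.

Lemma min_period_leq w p : 0 < p -> periodic (bead w) p -> min_period w <= p.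
Proof.
move=> p_gt0 wp; rewrite /min_period; case: ex_minnP => q _; apply.
by rewrite p_gt0; apply/periodicbP.
Qed.

Lemma min_period_dvd w p : periodic (bead w) p -> min_period w %| p.
Proof.
move=> wp; have g_gt0 : 0 < gcdn (min_period w) p by rewrite gcdn_gt0 min_period_gt0.
have le_g := min_period_leq g_gt0 (periodic_gcd (min_period_periodic w) wp).
have -> : min_period w = gcdn (min_period w) p.
  by apply/eqP; rewrite eqn_leq le_g dvdn_leq ?min_period_gt0 ?dvdn_gcdl.
exact: dvdn_gcdr.
Qed.

Lemma mem_necklaceP w v :
  reflect (exists i, forall j, bead v j = bead w (i + j)) (v \in necklace_of w).
Proof.
apply: (iffP imsetP) => [[i _ ->] | [i vw]].
  by exists i => j; rewrite (bead_rot _ _ (ltnW (ltn_ord i))).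
exists (Ordinal (ltn_pmod i n_gt0)); first by [].
apply: eq_from_bead => j.
by rewrite (bead_rot _ _ (ltnW (ltn_pmod i n_gt0))) vw -bead_mod -modnDml bead_mod.
Qed.

Lemma mem_necklace_self w : w \in necklace_of w.
Proof. by apply/mem_necklaceP; exists 0. Qed.

Lemma necklace_of_mem w v : v \in necklace_of w -> necklace_of v = necklace_of w.
Proof.
case/mem_necklaceP=> i vw; apply/setP => u; apply/mem_necklaceP/mem_necklaceP.
  by case=> k uv; exists (i + k) => j; rewrite uv vw addnA.
case=> k uw; exists (k + n.-1 * i) => j; rewrite uw vw.
have -> : i + (k + n.-1 * i + j) = k + j + i * n.
  by rewrite -[in i * n](prednK n_gt0) mulnS [i * _]mulnC; lia.
by rewrite periodicM //; apply: bead_periodic.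
Qed.

Lemma card_necklaceE w : (#|necklace_of w| == n) = (min_period w == n).
Proof.
have le_mp_n : min_period w <= n by apply: min_period_leq => //; apply: bead_periodic.
have -> : (#|necklace_of w| == n) = (#|necklace_of w| == #|'I_n|) by rewrite card_ord.
apply/imset_injP/idP => [rot_inj | /eqP mp_n].
  rewrite eqn_leq le_mp_n leqNgt; apply/negP => lt_mp_n.
  have : [tuple of rot (Ordinal lt_mp_n) w] = [tuple of rot (Ordinal n_gt0) w] :> word n.
    apply: eq_from_bead => j.
    rewrite (bead_rot _ _ (ltnW lt_mp_n)) (bead_rot _ _ (ltnW n_gt0)) addnC.
    exact: min_period_periodic.
  move/rot_inj => /(_ isT isT) /(congr1 val) /= mp0.
  by move: (min_period_gt0 w); rewrite mp0.
suff no_shift (i k : 'I_n) : i < k -> [tuple of rot i w] <> [tuple of rot k w] :> word n.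
  move=> i k _ _ eq_ik; apply: val_inj.
  case: (ltngtP i k) => [lt_ik | lt_ki | //].
    by case: (no_shift _ _ lt_ik eq_ik).
  by case: (no_shift _ _ lt_ki (esym eq_ik)).
move=> lt_ik eq_ik; have : periodic (bead w) (k - i).
  apply: periodic_shift (bead_periodic w) (ltnW (ltn_ord i)) (ltnW lt_ik) _ => j.
  rewrite -(bead_rot _ _ (ltnW (ltn_ord i))) -(bead_rot _ _ (ltnW (ltn_ord k))).
  by rewrite eq_ik.
move/(min_period_leq _); rewrite subn_gt0 mp_n => /(_ lt_ik).
by have := ltn_ord k; lia.
Qed.

End Beads.

Lemma eq_min_period m n (w : word m) (v : word n) :
  0 < m -> 0 < n -> bead w =1 bead v -> min_period w = min_period v.
Proof.
move=> m_gt0 n_gt0 wv.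
have per_wv p : periodic (bead w) p <-> periodic (bead v) p.
  by split=> per j; move: (per j); rewrite !wv.
apply/eqP; rewrite eqn_leq !min_period_leq ?min_period_gt0 //.
  by apply/per_wv/min_period_periodic.
by apply/per_wv/min_period_periodic.
Qed.

Definition repeat_word m n (r : word n) : word m := [tuple bead r i | i < m].

Lemma bead_repeat m n (r : word n) :
  0 < m -> periodic (bead r) m -> bead (repeat_word m r) =1 bead r.
Proof. by move=> m_gt0 r_m j; rewrite bead_mktuple // periodic_modE. Qed.

Lemma bead_repeat_dvd m n (r : word n) :
  0 < m -> n %| m -> bead (repeat_word m r) =1 bead r.
Proof.
move=> m_gt0 /divnK def_m; apply: bead_repeat => //.
by rewrite -def_m; apply/periodicM/bead_periodic.
Qed.

Section Complement.

Variable n : nat.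
Implicit Types (w : word n) (N : {set word n}).

Definition compl_word w : word n := map_tuple negb w.

Definition compl_necklace N : {set word n} := compl_word @: N.

Lemma compl_wordK : involutive compl_word.
Proof.
by move=> w; apply: val_inj; rewrite /= -map_comp map_id_in // => b _ /=; rewrite negbK.
Qed.

Lemma bead_compl w j : 0 < n -> bead (compl_word w) j = ~~ bead w j.
Proof. by move=> n_gt0; rewrite /bead (nth_map false) // size_tuple ltn_pmod. Qed.

Lemma count_compl w : count id (compl_word w) = n - count id w.
Proof.
suff -> : count id (compl_word w) = size w - count id w by rewrite size_tuple.
by rewrite -(count_predC id w) addKn count_map; apply: eq_count.
Qed.

Lemma compl_necklace_of w : compl_necklace (necklace_of w) = necklace_of (compl_word w).
Proof.
rewrite /compl_necklace -imset_comp; apply: eq_imset => i.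
by apply: val_inj; rewrite /= map_rot.
Qed.

Lemma compl_necklaceK : involutive compl_necklace.
Proof.
by move=> N; rewrite /compl_necklace -imset_comp (eq_imset _ compl_wordK) imset_id.
Qed.

Lemma card_necklace_compl w : #|necklace_of (compl_word w)| = #|necklace_of w|.
Proof. by rewrite -compl_necklace_of card_imset //; apply: can_inj compl_wordK. Qed.

End Complement.

Definition self_compl_necklaces d :=
  [set N in primitive_necklaces d | compl_necklace N == N].

Lemma primitive_necklacesP d N :
  reflect (exists2 w : word (2 * d),
             balanced w && (#|necklace_of w| == 2 * d) & N = necklace_of w)
          (N \in primitive_necklaces d).
Proof. by apply: (iffP imsetP) => -[w]; rewrite ?inE => wP ->; exists w; rewrite ?inE. Qed.

Lemma odd_card_primitive_necklaces d :
  odd #|primitive_necklaces d| = odd #|self_compl_necklaces d|.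
Proof.
apply: odd_card_involution => [N /primitive_necklacesP[w /andP[bal_w prim_w] ->] | N _].
  apply/primitive_necklacesP; exists (compl_word w); last exact: compl_necklace_of.
  rewrite card_necklace_compl prim_w andbT /balanced count_compl (eqP bal_w).
  by rewrite mul2n -addnn addnK.
exact: compl_necklaceK.
Qed.

(** * Self-complementary necklaces and antiperiodic words *)

Section AntiperiodicWords.

Variable d : nat.
Implicit Types w : word (2 * d).

Definition antiperiodic_words := [set w : word (2 * d) | rot d w == map negb w].

Definition primitive_antiperiodic_words :=
  [set w in antiperiodic_words | #|necklace_of w| == 2 * d].

Lemma antiperiodic_balanced w : w \in antiperiodic_words -> balanced w.
Proof.
rewrite inE => /eqP rot_w; rewrite /balanced.
have count_rot : count id (rot d w) = count id w.
  by have /permP-> : perm_eq (rot d w) w by rewrite perm_rot.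
have := count_compl w; rewrite /= -rot_w count_rot => ?; apply/eqP; lia.
Qed.

Fact antiperiodic_ext_subproof (u : d.-tuple bool) : size (u ++ map negb u) == 2 * d.
Proof. by rewrite size_cat size_map size_tuple addnn mul2n. Qed.

Definition antiperiodic_ext u : word (2 * d) := Tuple (antiperiodic_ext_subproof u).

Lemma card_antiperiodic_words : #|antiperiodic_words| = 2 ^ d.
Proof.
have ext_inj : injective antiperiodic_ext.
  move=> u v /(congr1 (take d \o val)) /=.
  by rewrite !take_size_cat ?size_tuple // => /val_inj.
transitivity #|{: d.-tuple bool}|; last by rewrite card_tuple card_bool.
rewrite -cardsT -(card_imset _ ext_inj).
apply: eq_card => w; rewrite inE; apply/eqP/imsetP => [rot_w | [u _ ->]] /=.
  have size_take : size (take d w) == d by rewrite size_takel // size_tuple leq_pmull.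
  exists (Tuple size_take) => //; apply: val_inj => /=.
  move: rot_w; rewrite /rot -[in map _ w](cat_take_drop d w) map_cat => /eqP.
  rewrite eqseq_cat => [/andP[/eqP <- _]|]; first by rewrite cat_take_drop.
  by rewrite size_drop size_map size_tuple (eqP size_take); lia.
rewrite -[in rot d](size_tuple u) rot_size_cat map_cat mapK //; exact: negbK.
Qed.

Hypothesis d_gt0 : 0 < d.

Let n_gt0 : 0 < 2 * d. Proof. by rewrite muln_gt0. Qed.

Lemma antiperiodic_wordsP w : reflect (antiperiodic (bead w) d) (w \in antiperiodic_words).
Proof.
have le_d_2d : d <= 2 * d by rewrite leq_pmull.
rewrite inE; apply: (iffP eqP) => [rot_w j | anti_w].
  have : [tuple of rot d w] = compl_word w by apply: val_inj.
  by move/(congr1 (fun v => bead v j)); rewrite bead_rot // bead_compl // addnC.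
suff : [tuple of rot d w] = compl_word w by move/(congr1 val).
by apply: eq_from_bead => j; rewrite bead_rot // bead_compl // addnC.
Qed.

Lemma self_compl_antiperiodic w : #|necklace_of w| == 2 * d ->
  compl_necklace (necklace_of w) = necklace_of w -> w \in antiperiodic_words.
Proof.
move=> prim_w self_w; have : compl_word w \in necklace_of w.
  by rewrite -self_w; apply/imset_f/mem_necklace_self.
case/(mem_necklaceP n_gt0) => i wi.
have anti_i : antiperiodic (bead w) i by move=> j; rewrite addnC -wi bead_compl.
apply/antiperiodic_wordsP/(antiperiodic_dvd (bead_periodic w) anti_i).
have := min_period_dvd n_gt0 (antiperiodic_periodic anti_i).
by rewrite (eqP (etrans (esym (card_necklaceE n_gt0 w)) prim_w)) dvdn_pmul2l.
Qed.

Lemma necklace_primitive_antiperiodic w :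
  w \in primitive_antiperiodic_words -> necklace_of w \in self_compl_necklaces d.
Proof.
case/setIdP=> anti_w prim_w; rewrite inE; apply/andP; split.
  by apply/primitive_necklacesP; exists w; rewrite ?antiperiodic_balanced.
rewrite compl_necklace_of; apply/eqP/necklace_of_mem/mem_necklaceP => //.
by exists d => j; rewrite bead_compl // addnC (antiperiodic_wordsP _ anti_w).
Qed.

Lemma card_primitive_antiperiodic_words :
  #|primitive_antiperiodic_words| = #|self_compl_necklaces d| * (2 * d).
Proof.
rewrite -sum1_card (partition_big (@necklace_of _) (mem (self_compl_necklaces d))) /=;
  last by move=> w; apply: necklace_primitive_antiperiodic.
rewrite -sum_nat_const; apply: eq_bigr => N.
case/setIdP=> /primitive_necklacesP[w0 /andP[_ prim_w0] ->] /eqP self_w0.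
rewrite sum1dep_card.
transitivity #|necklace_of w0|; last exact/eqP.
apply: eq_card => w.
apply/setIdP/idP => [[_ /eqP <-] | w_w0]; first exact: mem_necklace_self.
have def_w := necklace_of_mem n_gt0 w_w0.
rewrite def_w eqxx; split=> //; apply/setIdP; rewrite def_w.
by split=> //; apply: self_compl_antiperiodic; rewrite def_w.
Qed.

End AntiperiodicWords.

Lemma odd_cofactor_half p d : p %| 2 * d -> ~~ (p %| d) ->
  exists2 e, p = 2 * e & (e %| d) && odd (d %/ e).
Proof.
case/dvdnP=> k def_2d p_ndvd_d; have def_k := odd_double_half k.
have def_p := odd_double_half p.
have k_odd : odd k.
  apply: contraNT p_ndvd_d => k_even; apply/dvdnP; exists k./2.
  by move: def_k; rewrite (negbTE k_even) /= => def_k; lia.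
have p_even : ~~ odd p.
  by move: (odd_double d); rewrite -mul2n def_2d oddM k_odd /= => ->.
exists p./2; first by move: def_p; rewrite (negbTE p_even) /= -mul2n; lia.
have e_gt0 : 0 < p./2 by apply: contraNT p_ndvd_d; rewrite -eqn0Ngt => /eqP e0; lia.
have def_d : d = k * p./2 by move: def_p; rewrite (negbTE p_even) /= -mul2n; lia.
by rewrite def_d dvdn_mull // mulnK.
Qed.

Definition odd_cofactor_divisors d := [set e : 'I_d.+1 | (e %| d) && odd (d %/ e)].

Definition half_min_period d (w : word (2 * d)) : 'I_d.+1 := inord (min_period w)./2.

Section AntiperiodicFibers.

Variable d : nat.
Hypothesis d_gt0 : 0 < d.

Let n_gt0 : 0 < 2 * d. Proof. by rewrite muln_gt0. Qed.

Lemma min_period_antiperiodic (w : word (2 * d)) : w \in antiperiodic_words d ->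
  exists2 e, min_period w = 2 * e & (e %| d) && odd (d %/ e).
Proof.
move/(antiperiodic_wordsP d_gt0) => anti_w; apply: odd_cofactor_half.
  exact/(min_period_dvd n_gt0)/bead_periodic.
apply/negP => /dvdnP[k def_d]; apply: (antiperiodic_not_periodic anti_w).
by have := periodicM k (min_period_periodic n_gt0 w); rewrite -def_d.
Qed.

Lemma half_min_periodE (w : word (2 * d)) e :
  min_period w = 2 * e -> half_min_period w = inord e.
Proof. by move=> mp_w; rewrite /half_min_period mp_w mul2n doubleK. Qed.

Lemma antiperiodic_words_fiber (e : 'I_d.+1) : e \in odd_cofactor_divisors d ->
  [set w in antiperiodic_words d | half_min_period w == e]
    = [set repeat_word (2 * d) r | r in primitive_antiperiodic_words e].
Proof.
case/setIdP=> e_dvd_d cofactor_odd.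
have e_gt0 : 0 < e := dvdn_gt0 d_gt0 e_dvd_d.
have e2_gt0 : 0 < 2 * e by rewrite muln_gt0.
have e_le_d : e <= d := dvdn_leq d_gt0 e_dvd_d.
apply/setP => w; rewrite inE; apply/andP/imsetP => [[anti_w /eqP half_w] | [r r_prim ->]].
  have [e' mp_w /andP[e'_dvd_d _]] := min_period_antiperiodic anti_w.
  have def_e' : e' = e.
    move: half_w; rewrite (half_min_periodE mp_w) => /(congr1 val) /=.
    by rewrite inordK // ltnS dvdn_leq.
  rewrite {}def_e' in mp_w.
  have w_per : periodic (bead w) (2 * e).
    by rewrite -mp_w; apply: min_period_periodic.
  have rw := bead_repeat e2_gt0 w_per.
  exists (repeat_word (2 * e) w).
    apply/setIdP; split.
      apply/(antiperiodic_wordsP e_gt0) => j; rewrite !rw.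
      exact: antiperiodic_dvd (antiperiodic_wordsP d_gt0 _ anti_w) e_dvd_d j.
    by rewrite card_necklaceE // (eq_min_period _ n_gt0 rw) ?mp_w.
  apply: eq_from_bead => j; rewrite bead_repeat ?rw //.
  by move=> i; rewrite !rw; apply: bead_periodic.
case/setIdP: r_prim => anti_r prim_r.
have e2_dvd_2d : 2 * e %| 2 * d by rewrite dvdn_pmul2l.
have rr := bead_repeat_dvd r n_gt0 e2_dvd_2d.
split.
  apply/(antiperiodic_wordsP d_gt0) => j; rewrite !rr.
  have := antiperiodicM_odd (antiperiodic_wordsP e_gt0 _ anti_r) cofactor_odd j.
  by rewrite divnK.
rewrite (half_min_periodE (e := e)); last first.
  by rewrite (eq_min_period n_gt0 e2_gt0 rr); apply/eqP; rewrite -card_necklaceE.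
by apply/eqP/val_inj; rewrite /= inordK.
Qed.

Lemma sum_self_compl_necklaces :
  2 ^ d = \sum_(e in odd_cofactor_divisors d) #|self_compl_necklaces e| * (2 * e).
Proof.
rewrite -card_antiperiodic_words -sum1_card.
rewrite (partition_big (@half_min_period d) (mem (odd_cofactor_divisors d))) /=; last first.
  move=> w anti_w; have [e mp_w e_oddco] := min_period_antiperiodic anti_w.
  case/andP: (e_oddco) => e_dvd_d _.
  by rewrite (half_min_periodE mp_w) inE inordK // ltnS dvdn_leq.
apply: eq_bigr => e e_oddco; rewrite sum1dep_card (antiperiodic_words_fiber e_oddco).
case/setIdP: e_oddco => e_dvd_d _.
have e_gt0 : 0 < e := dvdn_gt0 d_gt0 e_dvd_d.
have e2_dvd_2d : 2 * e %| 2 * d by rewrite dvdn_pmul2l.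
rewrite -card_primitive_antiperiodic_words //; apply: card_in_imset => r s _ _ rs.
apply: eq_from_bead => j.
by rewrite -(bead_repeat_dvd r n_gt0 e2_dvd_2d) rs bead_repeat_dvd.
Qed.

End AntiperiodicFibers.

(** * The parity recurrence *)

Lemma odd_sum_card (I : finType) (A : {pred I}) (G : I -> nat) :
  odd (\sum_(i in A) G i) = odd #|[set i in A | odd (G i)]|.
Proof.
rewrite -sum1dep_card big_mkcondr /=.
apply: (big_ind2 (fun a b => odd a = odd b)) => // [a b x y | i _].
  by rewrite !oddD => -> ->.
by case: odd.
Qed.

Lemma odd_div_exp2_logn n : 0 < n -> odd (n %/ 2 ^ logn 2 n).
Proof.
move=> n_gt0; have [m m_odd def_n] := pfactor_coprime (isT : prime 2) n_gt0.
by rewrite {1}def_n mulnK ?expn_gt0 // -coprime2n.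
Qed.

Lemma logn2_odd_cofactor d e : 0 < d -> e %| d -> odd (d %/ e) -> logn 2 e = logn 2 d.
Proof.
move=> d_gt0 e_dvd_d cofactor_odd; rewrite -[in RHS](divnK e_dvd_d) mulnC.
rewrite lognM ?(dvdn_gt0 d_gt0 e_dvd_d) ?odd_gt0 // [logn 2 (d %/ e)]logn_coprime ?addn0 //.
by rewrite coprime2n.
Qed.

Lemma double_leq_exp2 a : a.*2 <= 2 ^ a.
Proof. by case: a => // a; rewrite expnS mul2n leq_double ltn_expl. Qed.

Lemma leq_succ_logn2 d : 0 < d -> (d <= (logn 2 d).+1) = (d <= 2).
Proof.
move=> d_gt0; apply/idP/idP; last by case: d d_gt0 => [|[|[|]]].
have := dvdn_leq d_gt0 (pfactor_dvdnn 2 d); have := double_leq_exp2 (logn 2 d); lia.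
Qed.

Lemma odd_card_recurrence (F : nat -> nat) d : 0 < d ->
  2 ^ d = \sum_(e in odd_cofactor_divisors d) F e * (2 * e) ->
  odd #|[set e in odd_cofactor_divisors d | odd (F e)]| = (d <= 2).
Proof.
move=> d_gt0 rec_d; set a := logn 2 d.
have odd_part_e (e : 'I_d.+1) : e \in odd_cofactor_divisors d ->
    e = e %/ 2 ^ a * 2 ^ a :> nat /\ odd (e %/ 2 ^ a).
  case/setIdP=> e_dvd_d cof_odd; rewrite /a -(logn2_odd_cofactor d_gt0 e_dvd_d cof_odd).
  by rewrite divnK ?pfactor_dvdnn // odd_div_exp2_logn // (dvdn_gt0 d_gt0 e_dvd_d).
have term_e (e : 'I_d.+1) : e \in odd_cofactor_divisors d ->
    F e * (2 * e) = 2 ^ a.+1 * (F e * (e %/ 2 ^ a)).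
  by case/odd_part_e => def_e _; rewrite [in 2 * _]def_e expnS; nia.
rewrite (eq_bigr _ term_e) -big_distrr /= in rec_d.
have le_a_d : a.+1 <= d.
  exact: leq_trans (ltn_expl a (ltnSn 1)) (dvdn_leq d_gt0 (pfactor_dvdnn 2 d)).
have sum_odd : \sum_(e in odd_cofactor_divisors d) F e * (e %/ 2 ^ a) = 2 ^ (d - a.+1).
  by apply/eqP; rewrite -(eqn_pmul2l (expn_gt0 2 a.+1)) -expnD subnKC // -rec_d.
rewrite -leq_succ_logn2 // -/a -subn_eq0.
move: (congr1 odd sum_odd); rewrite odd_sum_card oddX orbF => <-.
congr (odd _); apply: eq_card => e.
by apply/setIdP/setIdP => -[e_oddco]; rewrite oddM (odd_part_e e e_oddco).2 andbT.
Qed.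

Lemma squarefreeP n : 0 < n ->
  reflect (forall p, prime p -> ~~ (p * p %| n)) (squarefree n).
Proof.
move=> n_gt0; apply: (iffP forallP) => [sqf_n p p_prime | sqf_n p].
  apply/negP => pp_dvd_n; have lt_p_n1 : p < n.+1.
    by rewrite ltnS (leq_trans _ (dvdn_leq n_gt0 pp_dvd_n)) // leq_pmull ?prime_gt0.
  by have /implyP/(_ p_prime) := sqf_n (Ordinal lt_p_n1); rewrite pp_dvd_n.
by apply/implyP; apply: sqf_n.
Qed.

Lemma squarefree_dvd m n : 0 < n -> m %| n -> squarefree n -> squarefree m.
Proof.
move=> n_gt0 m_dvd_n /(squarefreeP n_gt0) sqf_n.
apply/(squarefreeP (dvdn_gt0 n_gt0 m_dvd_n)) => p /sqf_n.
by apply: contra => /dvdn_trans->.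
Qed.

Lemma squarefreeM_prime e p : 0 < e -> prime p -> ~~ (p %| e) ->
  squarefree e -> squarefree (e * p).
Proof.
move=> e_gt0 p_prime p_ndvd_e /(squarefreeP e_gt0) sqf_e.
apply/squarefreeP => [|q q_prime]; first by rewrite muln_gt0 e_gt0 prime_gt0.
have [-> | q_neq_p] := eqVneq q p.
  by rewrite dvdn_pmul2r ?prime_gt0.
have q_coprime_p : coprime (q * q) p.
  by rewrite coprimeMl andbb prime_coprime // dvdn_prime2 // q_neq_p.
by rewrite Gauss_dvdl // sqf_e.
Qed.

Lemma squarefree_exp2 a : squarefree (2 ^ a) = (a <= 1).
Proof.
have pow_gt0 : 0 < 2 ^ a by rewrite expn_gt0.
case: leqP => [le_a1 | lt_1a].
  apply/(squarefreeP pow_gt0) => p /prime_gt1 p_gt1.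
  apply/negP => /(dvdn_leq pow_gt0); have := leq_pexp2l (isT : 0 < 2) le_a1; nia.
apply/negP => /(squarefreeP pow_gt0)/(_ 2 isT)/negP; apply.
exact: (dvdn_exp2l 2 lt_1a).
Qed.

Definition toggle_factor p e := if p %| e then e %/ p else e * p.

Section OddPrimeFactor.

Variables d p : nat.
Hypotheses (d_gt0 : 0 < d) (p_prime : prime p) (p_odd : odd p) (p_dvd_d : p %| d).

Lemma toggle_factor_odd_cofactor e : e %| d -> odd (d %/ e) -> squarefree e ->
  [/\ toggle_factor p e %| d, odd (d %/ toggle_factor p e),
      squarefree (toggle_factor p e) & (p %| toggle_factor p e) = ~~ (p %| e)].
Proof.
move=> e_dvd_d cof_odd sqf_e; have e_gt0 := dvdn_gt0 d_gt0 e_dvd_d.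
have p_gt0 := prime_gt0 p_prime.
rewrite /toggle_factor; case: ifPn => [p_dvd_e | p_ndvd_e].
  have def_e : e = e %/ p * p by rewrite divnK.
  have e1_dvd_e : e %/ p %| e by rewrite {2}def_e dvdn_mulr.
  split; [exact: dvdn_trans e_dvd_d | | exact: squarefree_dvd e1_dvd_e sqf_e |].
    by rewrite divnA // -divn_mulAC // oddM cof_odd p_odd.
  have := squarefreeP e_gt0 sqf_e p p_prime.
  by rewrite {1}def_e dvdn_pmul2r // => /negbTE.
have p_dvd_cof : p %| d %/ e.
  by move: p_dvd_d; rewrite -{1}(divnK e_dvd_d) mulnC Euclid_dvdM // (negbTE p_ndvd_e).
have cof_e : d %/ e = d %/ e %/ p * p by rewrite divnK.
split; last by rewrite dvdn_mull.
- by rewrite -(divnK e_dvd_d) [_ * e]mulnC dvdn_pmul2l.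
- by move: cof_odd; rewrite divnMA {1}cof_e oddM => /andP[].
- exact: squarefreeM_prime.
Qed.

Lemma even_card_squarefree_odd_cofactor_divisors :
  ~~ odd #|[set e in odd_cofactor_divisors d | squarefree e]|.
Proof.
set S := [set e in _ | _].
pose g (e : 'I_d.+1) : 'I_d.+1 := inord (toggle_factor p e).
have toggleS e : e \in S -> [/\ g e = toggle_factor p e :> nat, g e \in S &
                                (p %| g e) = ~~ (p %| e)].
  rewrite !inE => /andP[/andP[e_dvd_d cof_odd] sqf_e].
  have [t_dvd_d t_odd t_sqf t_p] := toggle_factor_odd_cofactor e_dvd_d cof_odd sqf_e.
  have g_val : g e = toggle_factor p e :> nat by rewrite inordK // ltnS dvdn_leq.
  split=> //; last by rewrite g_val.
  by rewrite g_val t_dvd_d t_odd.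
have -> : odd #|S| = odd #|[set e in S | g e == e]|.
  apply: odd_card_involution => [e /toggleS[] // | e e_S].
  have [g_val g_S p_g] := toggleS e e_S; have [gg_val _ _] := toggleS _ g_S.
  apply: val_inj; rewrite /= gg_val /toggle_factor p_g g_val /toggle_factor.
  case p_e: (p %| e) => /=; first by rewrite divnK ?p_e.
  by rewrite mulnK ?prime_gt0.
suff -> : [set e in S | g e == e] = set0 by rewrite cards0.
apply/setP => e; rewrite inE in_set0; apply/andP => -[/toggleS[_ _ p_g] /eqP ge].
by move: p_g; rewrite ge; case: (p %| e).
Qed.

End OddPrimeFactor.

Lemma odd_card_squarefree_odd_cofactor_divisors d : 0 < d ->
  odd #|[set e in odd_cofactor_divisors d | squarefree e]| = (d <= 2).
Proof.
move=> d_gt0; have [m m_odd def_d] := pfactor_coprime (isT : prime 2) d_gt0.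
rewrite coprime2n in m_odd; set a := logn 2 d in def_d.
have [m_gt1 | m_le1] := ltnP 1 m.
  have p_odd : odd (pdiv m).
    by apply: contraLR m_odd; rewrite -!dvdn2 => /dvdn_trans; apply; apply: pdiv_dvd.
  have p_dvd_d : pdiv m %| d by rewrite def_d dvdn_mulr ?pdiv_dvd.
  have := even_card_squarefree_odd_cofactor_divisors d_gt0 (pdiv_prime m_gt1) p_odd p_dvd_d.
  move/negbTE => ->; apply/esym/negbTE; rewrite -ltnNge def_d.
  have m_neq2 : m != 2 by apply: contraTneq m_odd => ->.
  have : 0 < 2 ^ a by rewrite expn_gt0.
  by have := odd_gt0 m_odd; nia.
have {}def_d : d = 2 ^ a.
  by rewrite def_d (_ : m = 1) ?mul1n //; have := odd_gt0 m_odd; lia.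
have -> : odd_cofactor_divisors d = [set ord_max].
  apply/setP => e; rewrite !inE; apply/idP/eqP => [/andP[e_dvd_d cof_odd] | ->]; last first.
    by rewrite /= dvdnn divnn d_gt0.
  apply/val_inj/eqP; rewrite /= eqn_dvd e_dvd_d {1}def_d /a.
  by rewrite -(logn2_odd_cofactor d_gt0 e_dvd_d cof_odd) pfactor_dvdnn.
have -> : (d <= 2) = squarefree d.
  by rewrite def_d squarefree_exp2 -[in RHS](leq_exp2l _ _ (ltnSn 1)).
case sqf_d: (squarefree d).
  have -> : [set e in [set ord_max] | squarefree e] = [set ord_max] :> {set 'I_d.+1}.
    by apply/setP => e; rewrite !inE; case: eqP => [-> /= | _]; rewrite ?sqf_d.
  by rewrite cards1.
suff -> : [set e in [set ord_max] | squarefree e] = set0 :> {set 'I_d.+1} by rewrite cards0.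
by apply/setP => e; rewrite !inE; case: eqP => [-> /= | _]; rewrite ?sqf_d.
Qed.

Lemma odd_squarefree_of_recurrence (F : nat -> nat) :
  (forall d, 0 < d -> 2 ^ d = \sum_(e in odd_cofactor_divisors d) F e * (2 * e)) ->
  forall d, 0 < d -> odd (F d) = squarefree d.
Proof.
move=> rec; elim/ltn_ind => d IH d_gt0.
have := odd_card_recurrence d_gt0 (rec d d_gt0).
rewrite -(odd_card_squarefree_odd_cofactor_divisors d_gt0).
rewrite (cardsD1 ord_max [set e in odd_cofactor_divisors d | odd (F e)]).
rewrite (cardsD1 ord_max [set e in odd_cofactor_divisors d | squarefree e]).
rewrite !inE /= dvdnn divnn d_gt0 /=.
suff -> : [set e in odd_cofactor_divisors d | odd (F e)] :\ ord_max
        = [set e in odd_cofactor_divisors d | squarefree e] :\ ord_max.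
  by rewrite !oddD !oddb => /addIb.
apply/setP => e; rewrite !inE; case: eqP => //= /eqP e_neq_d.
case e_oddco: ((e %| d) && odd (d %/ e)) => //=; case/andP: e_oddco => e_dvd_d _.
apply: IH (dvdn_gt0 d_gt0 e_dvd_d).
rewrite ltn_neqAle -ltnS ltn_ord andbT.
by apply: contra e_neq_d => /eqP e_d; apply/eqP/val_inj.
Qed.

Theorem theorem2p5 (d : nat) : 0 < d ->
  odd #|primitive_necklaces d| = squarefree d.
Proof.
move=> d_gt0; rewrite odd_card_primitive_necklaces.
apply: (odd_squarefree_of_recurrence (F := fun e => #|self_compl_necklaces e|)) => // e.
exact: sum_self_compl_necklaces.
Qed.
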